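(* Let $G$ be an orderable group. Then: (1) $\operatorname{Conj}(G)$ is a right orderable quandle. (2) $\operatorname{Core}(G)$ is a left orderable quandle. (3) If $\phi\in\operatorname{Aut}(G)$ is an order reversing automorphism, then $\operatorname{Alex}(G,\phi)$ is a left orderable quandle.
   Context: A group $G$ is orderable if it admits a linear order $<$ such that $x<y$ implies $zx<zy$ and $xz<yz$ for all $x,y,z\in G$; an automorphism $\phi$ of $G$ is order reversing (for such an order) if $x<y$ implies $\phi(y)<\phi(x)$. $\operatorname{Conj}(G)$ is the set $G$ with operation $a*b=b^{-1}ab$; $\operatorname{Core}(G)$ is the set $G$ with operation $a*b=ba^{-1}b$; for $\phi\in\operatorname{Aut}(G)$, $\operatorname{Alex}(G,\phi)$ is the set $G$ with operation $a*b=\phi(ab^{-1})b$; these are quandles. A quandle $Q$ with operation $*$ is right orderable if there is a linear order $<$ on $Q$ such that $x<y$ implies $x*z<y*z$ for all $x,y,z\in Q$, and left orderable if there is a linear order $<$ on $Q$ such that $x<y$ implies $z*x<z*y$ for all $x,y,z\in Q$. *)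

Definition is_group {G : Type} (mul : G -> G -> G) (e : G) (inv : G -> G) : Prop :=
  (forall x y z, mul (mul x y) z = mul x (mul y z)) /\
  (forall x, mul e x = x) /\ (forall x, mul x e = x) /\
  (forall x, mul (inv x) x = e) /\ (forall x, mul x (inv x) = e).

Definition strict_linear_order {T : Type} (lt : T -> T -> Prop) : Prop :=
  (forall x, ~ lt x x) /\
  (forall x y z, lt x y -> lt y z -> lt x z) /\
  (forall x y, x <> y -> lt x y \/ lt y x).

Definition group_order {G : Type} (mul : G -> G -> G) (lt : G -> G -> Prop) : Prop :=
  strict_linear_order lt /\
  (forall x y z, lt x y -> lt (mul z x) (mul z y) /\ lt (mul x z) (mul y z)).

Definition orderable_group {G : Type} (mul : G -> G -> G) : Prop :=
  exists lt : G -> G -> Prop, group_order mul lt.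

Definition group_automorphism {G : Type} (mul : G -> G -> G) (phi : G -> G) : Prop :=
  (forall x y, phi (mul x y) = mul (phi x) (phi y)) /\
  (forall x y, phi x = phi y -> x = y) /\
  (forall y, exists x, phi x = y).

Definition order_reversing {G : Type} (lt : G -> G -> Prop) (phi : G -> G) : Prop :=
  forall x y, lt x y -> lt (phi y) (phi x).

Definition is_quandle {Q : Type} (op : Q -> Q -> Q) : Prop :=
  (forall x, op x x = x) /\
  (forall y, (forall x1 x2, op x1 y = op x2 y -> x1 = x2) /\ (forall z, exists x, op x y = z)) /\
  (forall x y z, op (op x y) z = op (op x z) (op y z)).

Definition right_orderable {Q : Type} (op : Q -> Q -> Q) : Prop :=
  exists lt : Q -> Q -> Prop, strict_linear_order lt /\
    (forall x y z, lt x y -> lt (op x z) (op y z)).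

Definition left_orderable {Q : Type} (op : Q -> Q -> Q) : Prop :=
  exists lt : Q -> Q -> Prop, strict_linear_order lt /\
    (forall x y z, lt x y -> lt (op z x) (op z y)).

Definition conj_op {G : Type} (mul : G -> G -> G) (inv : G -> G) (a b : G) : G :=
  mul (mul (inv b) a) b.
Definition core_op {G : Type} (mul : G -> G -> G) (inv : G -> G) (a b : G) : G :=
  mul (mul b (inv a)) b.
Definition alex_op {G : Type} (mul : G -> G -> G) (inv : G -> G) (phi : G -> G) (a b : G) : G :=
  mul (phi (mul a (inv b))) b.


(* Conj(G) is right orderable because conjugation by a fixed element is
   monotone in a bi-ordered group; Core(G) is left orderable because
   [x |-> x z^-1 x] is increasing (monotone in each occurrence of x).  For
   Alex(G, phi) one has [z * x = phi z (phi x)^-1 x]; since phi and inversion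
   both reverse the order, [(phi x)^-1] increases with x, and so does the
   product.  The quandle axioms are word identities in the group. *)

Section Group.

Variables (G : Type) (mul : G -> G -> G) (e : G) (inv : G -> G).
Hypothesis HG : is_group mul e inv.

Lemma mulgA x y z : mul x (mul y z) = mul (mul x y) z.
Proof. symmetry; apply HG. Qed.

Lemma mul1g x : mul e x = x.
Proof. apply HG. Qed.

Lemma mulg1 x : mul x e = x.
Proof. apply HG. Qed.

Lemma mulVg x : mul (inv x) x = e.
Proof. apply HG. Qed.

Lemma mulgV x : mul x (inv x) = e.
Proof. apply HG. Qed.

Lemma mulKg x y : mul (inv x) (mul x y) = y.
Proof. rewrite mulgA, mulVg; apply mul1g. Qed.

Lemma mulKVg x y : mul x (mul (inv x) y) = y.
Proof. rewrite mulgA, mulgV; apply mul1g. Qed.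

Lemma inv_unique x y : mul x y = e -> y = inv x.
Proof. intros Hxy. rewrite <- (mulKg x y), Hxy; apply mulg1. Qed.

Lemma invgK x : inv (inv x) = x.
Proof. symmetry; apply inv_unique, mulVg. Qed.

Lemma invMg x y : inv (mul x y) = mul (inv y) (inv x).
Proof.
  symmetry; apply inv_unique.
  rewrite <- mulgA, (mulgA y), mulgV, mul1g; apply mulgV.
Qed.

Lemma invg1 : inv e = e.
Proof. symmetry; apply inv_unique, mul1g. Qed.

(* Knuth and Bendix's complete rewriting system for groups: normal forms decide
   equality of group words, so [autorewrite] proves every word identity. *)
#[local] Hint Rewrite <- mulgA : group.
#[local] Hint Rewrite mul1g mulg1 mulVg mulgV mulKg mulKVg invgK invMg invg1 : group.

Lemma mulIg x y z : mul x z = mul y z -> x = y.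
Proof.
  intros Hxy; apply (f_equal (fun w => mul w (inv z))) in Hxy.
  autorewrite with group in Hxy; exact Hxy.
Qed.

Lemma right_translations_bijective (op : G -> G -> G) (undo : G -> G -> G) :
  (forall x y, undo (op x y) y = x) -> (forall z y, op (undo z y) y = z) ->
  forall y, (forall x1 x2, op x1 y = op x2 y -> x1 = x2) /\
            (forall z, exists x, op x y = z).
Proof.
  intros undoK opK y; split.
  - intros x1 x2 Hx. rewrite <- (undoK x1 y), Hx; apply undoK.
  - intros z. exists (undo z y); apply opK.
Qed.

Lemma conj_is_quandle : is_quandle (conj_op mul inv).
Proof.
  unfold is_quandle, conj_op; split; [| split].
  - intros x; autorewrite with group; reflexivity.
  - apply (right_translations_bijective _ (fun z y => mul (mul y z) (inv y)));
      intros; autorewrite with group; reflexivity.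
  - intros; autorewrite with group; reflexivity.
Qed.

Lemma core_is_quandle : is_quandle (core_op mul inv).
Proof.
  unfold is_quandle, core_op; split; [| split].
  - intros x; autorewrite with group; reflexivity.
  - apply (right_translations_bijective _ (fun z y => mul (mul y (inv z)) y));
      intros; autorewrite with group; reflexivity.
  - intros; autorewrite with group; reflexivity.
Qed.

Section Homomorphism.

Variable phi : G -> G.
Hypothesis phiM : forall x y, phi (mul x y) = mul (phi x) (phi y).

Lemma phi1 : phi e = e.
Proof.
  rewrite <- (mulKg (phi e) (phi e)), <- phiM, mul1g; apply mulVg.
Qed.

Lemma phiV x : phi (inv x) = inv (phi x).
Proof. apply inv_unique. rewrite <- phiM, mulgV; apply phi1. Qed.

#[local] Hint Rewrite phiM phiV phi1 : group.

Lemma alex_is_quandle :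
  (forall x y, phi x = phi y -> x = y) -> (forall y, exists x, phi x = y) ->
  is_quandle (alex_op mul inv phi).
Proof.
  intros phi_inj phi_surj; unfold is_quandle, alex_op; split; [| split].
  - intros x; autorewrite with group; reflexivity.
  - intros y; split.
    + intros x1 x2 Hx.
      apply mulIg, phi_inj, mulIg in Hx; exact Hx.
    + intros z. destruct (phi_surj (mul z (inv y))) as [w Hw].
      exists (mul w y); rewrite <- mulgA, mulgV, mulg1, Hw.
      autorewrite with group; reflexivity.
  - intros; autorewrite with group; reflexivity.
Qed.

End Homomorphism.

Section Ordered.

Variable lt : G -> G -> Prop.
Hypothesis Hlt : group_order mul lt.

Lemma lt_trans x y z : lt x y -> lt y z -> lt x z.
Proof. apply Hlt. Qed.

Lemma lt_mul2l x y z : lt x y -> lt (mul z x) (mul z y).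
Proof. intros Hxy; apply Hlt, Hxy. Qed.

Lemma lt_mul2r x y z : lt x y -> lt (mul x z) (mul y z).
Proof. intros Hxy; apply Hlt, Hxy. Qed.

Lemma lt_inv x y : lt x y -> lt (inv y) (inv x).
Proof.
  intros Hxy; apply (lt_mul2l _ _ (inv x)), (lt_mul2r _ _ (inv y)) in Hxy.
  autorewrite with group in Hxy; exact Hxy.
Qed.

Lemma conj_right_orderable : right_orderable (conj_op mul inv).
Proof.
  exists lt; split; [apply Hlt |].
  intros x y z Hxy; apply lt_mul2r, lt_mul2l, Hxy.
Qed.

Lemma core_left_orderable : left_orderable (core_op mul inv).
Proof.
  exists lt; split; [apply Hlt |].
  intros x y z Hxy; unfold core_op.
  apply (lt_trans _ (mul (mul x (inv z)) y)).
  - apply lt_mul2l, Hxy.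
  - apply lt_mul2r, lt_mul2r, Hxy.
Qed.

Lemma alex_left_orderable (phi : G -> G) :
  (forall x y, phi (mul x y) = mul (phi x) (phi y)) -> order_reversing lt phi ->
  left_orderable (alex_op mul inv phi).
Proof.
  intros phiM phi_rev; exists lt; split; [apply Hlt |].
  intros x y z Hxy; unfold alex_op.
  rewrite !phiM, !(phiV phi phiM), <- !mulgA; apply lt_mul2l.
  apply (lt_trans _ (mul (inv (phi x)) y)).
  - apply lt_mul2l, Hxy.
  - apply lt_mul2r, lt_inv, phi_rev, Hxy.
Qed.

End Ordered.

End Group.

Theorem proposition3p4 (G : Type) (mul : G -> G -> G) (e : G) (inv : G -> G)
  (HG : is_group mul e inv) (Hord : orderable_group mul) :
  (is_quandle (conj_op mul inv) /\ right_orderable (conj_op mul inv)) /\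
  (is_quandle (core_op mul inv) /\ left_orderable (core_op mul inv)) /\
  (forall (lt : G -> G -> Prop) (phi : G -> G),
     group_order mul lt -> group_automorphism mul phi -> order_reversing lt phi ->
     is_quandle (alex_op mul inv phi) /\ left_orderable (alex_op mul inv phi)).
Proof.
  destruct Hord as [lt0 Hlt0]; split; [| split].
  - exact (conj (conj_is_quandle _ _ _ _ HG) (conj_right_orderable _ _ inv _ Hlt0)).
  - exact (conj (core_is_quandle _ _ _ _ HG) (core_left_orderable _ _ inv _ Hlt0)).
  - intros lt phi Hlt [phiM [phi_inj phi_surj]] phi_rev; split.
    + exact (alex_is_quandle _ _ _ _ HG phi phiM phi_inj phi_surj).
    + exact (alex_left_orderable _ _ _ _ HG lt Hlt phi phiM phi_rev).
Qed.
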